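(* Let $\rho_n$ be the number of distinct Manacher arrays of strings of length $n$ (over arbitrary alphabets). Then $\rho_n=\Omega(3^n)$.
   Context: The Manacher array of a string $S$ of length $n$ is the array $\mathsf A[1..2n-1]$ where, for $i=2k-1$, $\mathsf A[i]$ is the largest $r\ge 0$ with $1\le k-r$, $k+r\le n$ and $S[k-r..k+r]$ a palindrome, and for $i=2k$, $\mathsf A[i]$ is the largest $r\ge0$ with $1\le k-r+1$, $k+r\le n$ and $S[k-r+1..k+r]$ a palindrome. *)

From mathcomp Require Import all_boot.
Set Implicit Arguments. Unset Strict Implicit. Unset Printing Implicit Defensive.

(* 1-based inclusive substring S[a..b] (empty when b < a). *)
Definition substr (T : Type) (s : seq T) (a b : nat) : seq T :=
  take (b.+1 - a) (drop a.-1 s).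

Definition is_pal (T : eqType) (w : seq T) : bool := w == rev w.

(* Entry A[i] (1-based i in 1..2n-1) of the Manacher array of s. *)
Definition manacher_entry (T : eqType) (s : seq T) (i : nat) : nat :=
  let n := size s in
  if odd i then
    (* i = 2k-1 *)
    let k := i.+1 %/ 2 in
    \max_(r < n.+1 | [&& 1 <= k - r, r < k, k + r <= n &
                        is_pal (substr s (k - r) (k + r))]) r
  else
    (* i = 2k ; condition 1 <= k - r + 1 (over integers) is r <= k *)
    let k := i %/ 2 in
    \max_(r < n.+1 | [&& r <= k, k + r <= n &
                        is_pal (substr s (k - r).+1 (k + r))]) r.

(* Manacher array A[1..2n-1], stored as a list whose j-th element (0-based)
   is A[j+1]. *)
Definition manacher (T : eqType) (s : seq T) : seq nat :=
  [seq manacher_entry s i | i <- iota 1 (2 * size s - 1)].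

Definition is_manacher_array (n : nat) (A : seq nat) : Prop :=
  exists (T : eqType) (s : seq T), size s = n /\ manacher s = A.

From mathcomp Require Import all_boot zify.
Set Implicit Arguments. Unset Strict Implicit. Unset Printing Implicit Defensive.

(* Build strings from [0; 1] by n - 2 moves, each one of three: repeat the
   last letter, append a fresh letter, or append the letter preceding the
   final run.  Where two move sequences first differ, one of the resulting
   strings contains a palindromic window (the last two letters, or the final
   run framed by its preceding letter) whose end letters differ in the other
   string; the Manacher entries at the centre of that window then differ.  So
   the 3^(n-2) move sequences yield pairwise distinct Manacher arrays. *)

Section ManacherEntry.

Variables (T : eqType) (x0 : T) (s : seq T).

Lemma is_pal_substrP a m : a + m <= size s ->
  reflect (forall t, t < m -> nth x0 s (a + t) = nth x0 s (a + m - 1 - t))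
          (is_pal (substr s a.+1 (a + m))).
Proof.
move=> le_am.
have -> : substr s a.+1 (a + m) = take m (drop a s).
  by rewrite /substr; congr (take _ _); lia.
set w := take m (drop a s).
have size_w : size w = m by rewrite size_take size_drop; case: ltnP; lia.
have nth_w t : t < m -> nth x0 w t = nth x0 s (a + t).
  by move=> lt_tm; rewrite nth_take // nth_drop.
apply: (iffP eqP) => [w_pal t lt_tm | sym].
  by rewrite -nth_w // w_pal nth_rev ?size_w // nth_w; [congr nth | ]; lia.
apply: (eq_from_nth (x0 := x0)); first by rewrite size_rev.
move=> t; rewrite size_w => lt_tm.
rewrite nth_rev ?size_w // nth_w // nth_w; last lia.
by rewrite sym //; congr nth; lia.
Qed.

Lemma is_pal_substr_run a m c : a + m <= size s ->
  nth x0 s a = nth x0 s (a + m - 1) ->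
  (forall t, a < t < a + m - 1 -> nth x0 s t = c) ->
  is_pal (substr s a.+1 (a + m)).
Proof.
move=> le_am ends inner; apply/is_pal_substrP => // t lt_tm.
have [->|t_gt0] := posnP t; first by rewrite addn0 subn0.
have [eq_t|lt_t] := eqVneq t m.-1.
  rewrite eq_t (_ : a + m - 1 - m.-1 = a) ?ends; last lia.
  by congr nth; lia.
by rewrite !inner //; lia.
Qed.

Definition pal_window a m := (a + m <= size s) && is_pal (substr s a.+1 (a + m)).

(* Entry [i] concerns the windows of length [2 r + i %% 2] starting (0-based)
   at [i %/ 2 - r]; thus the window [(a, m)] sits at index [2 a + m]. *)
Lemma manacher_entryE i : manacher_entry s i =
  \max_(r < (size s).+1 | (r <= i %/ 2) && pal_window (i %/ 2 - r) (2 * r + i %% 2)) r.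
Proof.
rewrite /manacher_entry /pal_window; have := modn2 i.
case: (odd i) => /= i_mod; rewrite i_mod;
apply: eq_bigl => r /=; case: (leqP r (i %/ 2)) => hr //=.
- have -> : i.+1 %/ 2 - r = (i %/ 2 - r).+1 by lia.
  have -> : i.+1 %/ 2 + r = i %/ 2 - r + (2 * r + 1) by lia.
  by have -> : r < i.+1 %/ 2 by lia.
- have -> : (r < i.+1 %/ 2) = false by lia.
  by rewrite /= andbF.
- by have -> : i %/ 2 + r = i %/ 2 - r + (2 * r + 0) by lia.
Qed.

Lemma manacher_entry_ge a m : pal_window a m -> m %/ 2 <= manacher_entry s (2 * a + m).
Proof.
move=> win; rewrite manacher_entryE.
have lt_r : m %/ 2 < (size s).+1 by move: win => /andP[? _]; lia.
apply: (leq_bigmax_cond (Ordinal lt_r)) => /=.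
have -> : (2 * a + m) %/ 2 - m %/ 2 = a by lia.
have -> : 2 * (m %/ 2) + (2 * a + m) %% 2 = m by lia.
by rewrite win andbT; lia.
Qed.

Lemma manacher_entry_lt a m : 1 < m -> a + m <= size s ->
  nth x0 s a != nth x0 s (a + m - 1) -> manacher_entry s (2 * a + m) < m %/ 2.
Proof.
move=> gt1_m le_am ends; rewrite manacher_entryE.
have half_gt0 : 0 < m %/ 2 by lia.
rewrite -(prednK half_gt0) ltnS; apply/bigmax_leqP => r /andP[hr /andP[le_win]].
set a' := _ - r; set m' := _ + _ => /(is_pal_substrP le_win) sym.
rewrite leqNgt; apply/negP => lt_r; move/eqP: ends; apply.
have := sym (a - a'); rewrite /a' /m'.
have -> : (2 * a + m) %/ 2 - r + (a - ((2 * a + m) %/ 2 - r)) = a by lia.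
have -> : (2 * a + m) %/ 2 - r + (2 * r + (2 * a + m) %% 2) - 1 - (a - ((2 * a + m) %/ 2 - r))
          = a + m - 1 by lia.
by apply; lia.
Qed.

End ManacherEntry.

Lemma nth_manacher (T : eqType) (s : seq T) i : 0 < i < 2 * size s ->
  nth 0 (manacher s) i.-1 = manacher_entry s i.
Proof.
case: i => [|i] /andP[_ lt_i] //=.
by rewrite /manacher (nth_map 0) ?size_iota ?nth_iota ?add1n //; lia.
Qed.

Lemma manacher_neq_window (T : eqType) (x0 c : T) (S S' : seq T) a m : 1 < m ->
  a + m <= size S -> a + m <= size S' ->
  nth x0 S a = nth x0 S (a + m - 1) ->
  (forall t, a < t < a + m - 1 -> nth x0 S t = c) ->
  nth x0 S' a != nth x0 S' (a + m - 1) ->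
  manacher S != manacher S'.
Proof.
move=> gt1_m le_S le_S' ends inner ends'; apply/negP => /eqP eq_SS'.
have pal_S : pal_window S a m by rewrite /pal_window le_S (is_pal_substr_run le_S ends inner).
have := manacher_entry_ge pal_S; have := manacher_entry_lt gt1_m le_S' ends'.
have := congr1 size eq_SS'; rewrite !size_map !size_iota => size_eq.
rewrite -!nth_manacher ?eq_SS'; lia.
Qed.

(* [run] is the letter of the final maximal run of [word] and [pre] the letter
   just before it.  Move 0 extends the run, move 1 appends the fresh letter
   [size word], move 2 appends [pre]. *)
Record state := State { word : seq nat; run : nat; pre : nat }.

Definition next_letter (st : state) (c : 'I_3) : nat :=
  if val c == 0 then run st else if val c == 1 then size (word st) else pre st.

Definition step (st : state) (c : 'I_3) : state :=
  State (rcons (word st) (next_letter st c)) (next_letter st c)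
        (if val c == 0 then pre st else run st).

Definition well_formed (st : state) : Prop :=
  let w := word st in
  [/\ run st != pre st, run st < size w, pre st < size w &
      exists2 a, a.+1 < size w &
        nth 0 w a = pre st /\ forall t, a < t < size w -> nth 0 w t = run st].

Definition init_state : state := State [:: 0; 1] 1 0.

Lemma well_formed_init : well_formed init_state.
Proof. by split => //; exists 0 => //; split => // -[|[|t]]. Qed.

Lemma well_formed_step st c : well_formed st -> well_formed (step st c).
Proof.
case=> neq_rp lt_run lt_pre [a lt_a [nth_a nth_run]].
rewrite /well_formed /step /= size_rcons.
have nth_old t : t < size (word st) -> nth 0 (rcons (word st) (next_letter st c)) t
                                       = nth 0 (word st) t.
  by move=> lt_t; rewrite nth_rcons lt_t.
have nth_new : nth 0 (rcons (word st) (next_letter st c)) (size (word st)) = next_letter st c.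
  by rewrite nth_rcons ltnn eqxx.
move: nth_old nth_new; case: c => -[|[|[|//]]] ? nth_old nth_new; rewrite /next_letter /=.
- split=> //; try lia; exists a; first lia.
  split=> [|t /andP[lt_at]]; first by rewrite nth_old //; lia.
  rewrite ltnS leq_eqVlt => /orP[/eqP-> | lt_t]; first by rewrite nth_new.
  by rewrite nth_old ?nth_run ?lt_at.
all: split; try lia; exists (size (word st)).-1; first lia.
all: split=> [|t]; first by rewrite nth_old ?nth_run; lia.
all: by move=> bounds; have -> : t = size (word st) by lia.
Qed.

Lemma size_word_foldl st q : size (word (foldl step st q)) = size (word st) + size q.
Proof. by elim: q st => [|c q IHq] st /=; rewrite ?addn0 // IHq size_rcons addSnnS. Qed.

Lemma nth_word_foldl st q t : t < size (word st) ->
  nth 0 (word (foldl step st q)) t = nth 0 (word st) t.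
Proof.
elim: q st => [|c q IHq] st //= lt_t.
by rewrite IHq /= ?size_rcons ?nth_rcons ?lt_t // ltnW.
Qed.

Lemma manacher_step_neq st x y q q' : well_formed st -> x != y -> size q = size q' ->
  manacher (word (foldl step (step st x) q)) != manacher (word (foldl step (step st y) q')).
Proof.
move=> wf_st; wlog lt_xy : x y q q' / x < y => [hwlog neq_xy eq_q | _ eq_q].
  case: (ltngtP x y) => [lt_xy | lt_yx | eq_xy]; first exact: hwlog.
    by rewrite eq_sym hwlog // eq_sym.
  by move: neq_xy; rewrite -val_eqE /= eq_xy eqxx.
case: wf_st => neq_rp lt_run lt_pre [a lt_a [nth_a nth_run]].
set n0 := size (word st) in lt_run lt_pre lt_a nth_run *.
have size_S z r : size (word (foldl step (step st z) r)) = n0 + 1 + size r.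
  by rewrite size_word_foldl size_rcons addn1.
have nth_old z r t : t < n0 -> nth 0 (word (foldl step (step st z) r)) t = nth 0 (word st) t.
  by move=> lt_t; rewrite nth_word_foldl /= ?size_rcons 1?ltnW // nth_rcons lt_t.
have nth_new z r : nth 0 (word (foldl step (step st z) r)) n0 = next_letter st z.
  by rewrite nth_word_foldl /= ?size_rcons // nth_rcons ltnn eqxx.
move: x y lt_xy => -[[|[|[|//]]] ?] -[[|[|[|//]]] ?] //= _.
1,2: apply: (@manacher_neq_window _ 0 0 _ _ n0.-1 2); rewrite ?size_S; try lia.
1-4: rewrite (_ : n0.-1 + 2 - 1 = n0); last lia.
1-4: rewrite nth_new nth_old ?nth_run /next_letter /=; lia.
rewrite eq_sym; apply: (@manacher_neq_window _ 0 (run st) _ _ a (n0 - a + 1)); rewrite ?size_S; try lia.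
1-3: rewrite (_ : a + (n0 - a + 1) - 1 = n0); last lia.
- by rewrite nth_new nth_old ?nth_a; last lia.
- by move=> t bounds; rewrite nth_old ?nth_run; lia.
- by rewrite nth_new nth_old ?nth_a /next_letter /=; lia.
Qed.

Lemma manacher_foldl_inj st q q' : well_formed st -> size q = size q' ->
  manacher (word (foldl step st q)) = manacher (word (foldl step st q')) -> q = q'.
Proof.
elim: q q' st => [|x q IHq] [|y q'] st //= wf_st [eq_q] eq_M.
have [eq_xy|neq_xy] := eqVneq x y.
  by rewrite -eq_xy in eq_M *; rewrite (IHq q' (step st x)) //; apply: well_formed_step.
by move: (manacher_step_neq wf_st neq_xy eq_q); rewrite eq_M eqxx.
Qed.

Theorem mainTheorem2 :
  exists (C N : nat), 0 < C /\
    forall n, N <= n ->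
      exists L : seq (seq nat),
        uniq L /\ (forall A, A \in L -> is_manacher_array n A) /\
        3 ^ n <= C * size L.
Proof.
exists 9, 2; split => // n le2n.
pose arr (c : (n - 2).-tuple 'I_3) := manacher (word (foldl step init_state c)).
exists [seq arr c | c : (n - 2).-tuple 'I_3]; split; [|split].
- rewrite map_inj_uniq ?enum_uniq // => c c' /manacher_foldl_inj eq_cc'.
  by apply: val_inj; apply: eq_cc'; [exact: well_formed_init | rewrite !size_tuple].
- move=> A /imageP[c _ ->]; exists nat, (word (foldl step init_state c)).
  by rewrite size_word_foldl /= size_tuple; split => //; lia.
- by rewrite size_map -cardE card_tuple card_ord -{1}(subnK le2n) expnD mulnC.
Qed.
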